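(* Let $K,D,U$ be integers with $0\le U\le D$ and $U+D\le K-2$, and let $\mathbb{F}_q$ be any finite field. Consider the two-sided single unicast index coding problem with symmetric neighboring and consecutive side-information with $K$ messages $x_0,\dots,x_{K-1}$ and $K$ receivers $R_0,\dots,R_{K-1}$, where $R_k$ wants $x_k$ and has side-information $$\mathcal{K}_k=\{x_{k-U},\dots,x_{k-1}\}\cup\{x_{k+1},\dots,x_{k+D}\}$$ (indices modulo $K$). Let $$a=\gcd(K,\,D-U,\,U+1),\qquad u_a=\frac{U+1}{a},\qquad \Delta_a=\frac{D-U}{a},\qquad K_a=\frac{K}{a}.$$ Let each message be a vector $x_k=(x_{k,1},\dots,x_{k,u_a})\in\mathbb{F}_q^{u_a}$. For $s\in[0:K_a-1]$ define $$y_s=\sum_{i=1}^{u_a}\sum_{j=0}^{a-1}x_{a(s+1-i)+j,\,i}\in\mathbb{F}_q$$ (first subscripts modulo $K$). Let $\mathbf{L}$ be the AIR matrix of size $K_a\times(K_a-\Delta_a)$ and $L_s$ its $s$-th row ($s\in[0:K_a-1]$). Then the code $$[c_0~c_1~\cdots~c_{K_a-\Delta_a-1}]=\sum_{s=0}^{K_a-1}y_sL_s$$ is an optimal length $u_a$-dimensional vector linear index code for this problem: every receiver $R_k$ can decode its wanted message vector $x_k$ from the $K_a-\Delta_a$ broadcast symbols $c_0,\dots,c_{K_a-\Delta_a-1}$ and its side-information, and the code achieves rate $\frac{u_a}{K_a-\Delta_a}=\frac{U+1}{K-D+U}$, which equals the symmetric capacity of the problem.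
   Context: Index coding: a transmitter holds messages $x_0,\dots,x_{K-1}$, each $x_k\in\mathbb{F}_q^{p}$ (a $p$-dimensional vector index code; $p=1$ is scalar). A linear index code of length $N$ is an $\mathbb{F}_q$-linear map $\mathbb{F}_q^{pK}\to\mathbb{F}_q^{N}$; its image symbols $c_0,\dots,c_{N-1}$ are broadcast over a noiseless channel. Receiver $R_k$ decodes if $x_k$ is determined (linearly) by the broadcast symbols together with the messages in its side-information set $\mathcal{K}_k$. The rate is $p/N$. For the problem above with $U+D\le K-2$, the symmetric capacity is $\frac{U+1}{K-D+U}$ symbols per message, and an index code is of optimal length if its rate equals this capacity. AIR matrix: for integers $m\ge n\ge 1$, the $m\times n$ binary matrix $\mathbf{L}_{m\times n}$ (entries $0,1$ regarded in $\mathbb{F}_q$) is built as follows. For $d\mid c$, let $\mathbf{I}_{c\times d}$ be the $c\times d$ matrix consisting of $c/d$ copies of the identity $\mathbf{I}_d$ stacked vertically, and $\mathbf{I}_{d\times c}$ its transpose. Start with an empty $m\times n$ matrix whose ''unfilled part'' is the whole matrix, of size $m\times n$. Step 1: write $m=qn+r$ with $0\le r<n$; fill the first $qn$ rows of the unfilled part with $\mathbf{I}_{qn\times n}$; the unfilled part is now its last $r$ rows (size $r\times n$); if $r=0$ stop. Step 2: write $n=q'r+r'$ with $0\le r'<r$; fill the first $q'r$ columns of the unfilled part with $\mathbf{I}_{r\times q'r}$ (i.e. $q'$ copies of $\mathbf{I}_r$ side by side); the unfilled part is now its last $r'$ columns (size $r\times r'$); if $r'=0$ stop; otherwise set $m\leftarrow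 r$, $n\leftarrow r'$ and return to Step 1. The resulting matrix is the AIR matrix of size $m\times n$. *)

From mathcomp Require Import all_boot all_order all_algebra.
Set Implicit Arguments. Unset Strict Implicit. Unset Printing Implicit Defensive.
Import GRing.Theory.

(* ---------- AIR matrix ----------
   air_aux fuel m n i j = entry (i,j) of the m x n AIR matrix (m >= n >= 1),
   following the two-step construction of the paper literally:
   Step 1: m = q n + r; rows i < q n are copies of I_n (entry 1 iff i mod n = j);
           remaining r rows form the unfilled part.
   Step 2: n = q' r + r'; in the unfilled part (row i' = i - q n), columns
           j < q' r are copies of I_r (entry 1 iff j mod r = i'); the remaining
           r x r' block is filled recursively with m := r, n := r'.
   Fuel m suffices since m strictly decreases at each recursion. *)
Fixpoint air_aux (fuel m n i j : nat) : bool :=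
  match fuel with
  | 0 => false
  | f.+1 =>
    if n == 0%N then false else
    if (i < (m %/ n) * n)%N then (i %% n == j) else
    let r := (m %% n)%N in
    let i' := (i - (m %/ n) * n)%N in
    if r == 0%N then false else
    if (j < (n %/ r) * r)%N then (j %% r == i') else
    air_aux f r (n %% r) i' (j - (n %/ r) * r)
  end.

Local Open Scope ring_scope.

Definition AIR (F : nzRingType) (m n : nat) : 'M[F]_(m, n) :=
  \matrix_(i < m, j < n) (air_aux m m n i j)%:R.

Definition a_par (K D U : nat) : nat := gcdn K (gcdn (D - U) U.+1).
Definition u_a (K D U : nat) : nat := (U.+1 %/ a_par K D U)%N.
Definition Delta_a (K D U : nat) : nat := ((D - U) %/ a_par K D U)%N.
Definition K_a (K D U : nat) : nat := (K %/ a_par K D U)%N.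
Definition N_len (K D U : nat) : nat := (K_a K D U - Delta_a K D U)%N.

(* message with index taken modulo K (K > 0 in the theorem, so insub succeeds) *)
Definition xat (F : nzRingType) (K p : nat) (x : 'I_K -> 'rV[F]_p) (n : nat)
  : 'rV[F]_p :=
  if @insub _ (fun i => (i < K)%N) 'I_K (n %% K)%N is Some i then x i else 0.

(* y_s = sum_{i=1}^{u_a} sum_{j=0}^{a-1} x_{a(s+1-i)+j, i}; with the 0-based
   column index i' = i-1 the first subscript is a(s - i') + j (mod K).
   Since a*i' < U+1 <= K, adding K keeps it in nat. *)
Definition y_sym (F : nzRingType) (K D U : nat)
  (x : 'I_K -> 'rV[F]_(u_a K D U)) (s : nat) : F :=
  \sum_(i < u_a K D U) \sum_(j < a_par K D U)
     xat x (K + a_par K D U * s + j - a_par K D U * i)%N 0 i.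

Definition code (F : nzRingType) (K D U : nat)
  (x : 'I_K -> 'rV[F]_(u_a K D U)) : 'rV[F]_(N_len K D U) :=
  \sum_(s < K_a K D U) y_sym x s *: row s (AIR F (K_a K D U) (N_len K D U)).

Definition side (K D U : nat) (k : 'I_K) : {set 'I_K} :=
  [set j : 'I_K | [exists t : 'I_U.+1, (0 < t)%N && (val j == (k + K - t) %% K)%N]
               || [exists t : 'I_D.+1, (0 < t)%N && (val j == (k + t) %% K)%N]].

Definition decodable (F : nzRingType) (K D U : nat) (k : 'I_K) : Prop :=
  exists (Dm : 'M[F]_(N_len K D U, u_a K D U))
         (E : 'I_K -> 'M[F]_(u_a K D U, u_a K D U)),
  forall x : 'I_K -> 'rV[F]_(u_a K D U),
    x k = code x *m Dm + \sum_(j in side D U k) x j *m E j.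

From mathcomp Require Import all_boot all_order all_algebra zify.
Set Implicit Arguments. Unset Strict Implicit. Unset Printing Implicit Defensive.
Import GRing.Theory Num.Theory.

(* Write a, u, Δ, n for a_par, u_a, Delta_a, K_a and N = n - Δ, so that
   a u = U + 1, a Δ = D - U and a n = K. By linearity, receiver k = a b + j0
   may assume its side information is zero. Then y_(b + i) = x_(k, i) for
   i < u, because every other term of that sum is a message at offset in
   [-U, U] \ {0} from k, and y_(b + u + e) = 0 for e < Δ, because all its
   terms are at offsets in [1, D]. So the codeword is a combination of the N
   rows of the n x N AIR matrix with indices in the cyclic window
   b + u + Δ, ..., b + u - 1 (mod n). Any N cyclically consecutive rows of an
   AIR matrix are linearly independent: rows of the top part are copies of
   the identity, and the bottom rows reduce, along the Euclidean recursion
   that builds the matrix, to a window of a smaller AIR matrix. The receiver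
   inverts that square submatrix and reads off x_k. The rate is
   u / N = a u / a N = (U + 1) / (K - D + U). *)

(** * Linear independence of selected rows *)

Section FreeRows.
Variable R : nzRingType.
Local Open Scope ring_scope.

(* Matrices are indexed by [nat] so that the
   recursion on AIR matrices can change dimensions freely. *)
Definition free_rows (M : nat -> nat -> R) (b : nat) (P Q : pred nat) :=
  forall y : nat -> R, (forall j, Q j -> \sum_(i < b | P i) y i * M i j = 0) ->
  forall i, (i < b)%N -> P i -> y i = 0.

Lemma free_rows0 M b (P Q : pred nat) :
  (forall i, (i < b)%N -> ~~ P i) -> free_rows M b P Q.
Proof. by move=> nP y _ i ib Pi; case/negP: (nP i ib). Qed.

Lemma free_rows_private M b (P Q : pred nat) :
  (forall i, (i < b)%N -> P i -> exists2 j, Q j &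
      M i j = 1 /\ forall i', (i' < b)%N -> P i' -> i' != i -> M i' j = 0) ->
  free_rows M b P Q.
Proof.
move=> priv y Hy i ib Pi; have [j Qj [M1 M0]] := priv i ib Pi.
have := Hy j Qj; rewrite (bigD1 (Ordinal ib)) //= big1 ?M1 ?mulr1 ?addr0 //.
by move=> k /andP[Pk nk]; rewrite M0 ?mulr0.
Qed.

Lemma free_rows_split M b (P A Q Q2 : pred nat) :
  (forall i j, (i < b)%N -> P i -> A i -> Q2 j -> M i j = 0) ->
  (forall j, Q2 j -> Q j) ->
  free_rows M b (predI P (predC A)) Q2 -> free_rows M b (predI P A) Q ->
  free_rows M b P Q.
Proof.
move=> M0 sQ2Q freeC freeA y Hy.
have yC i : (i < b)%N -> P i -> ~~ A i -> y i = 0.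
  move=> ib Pi nAi; apply: (freeC y) => //= [j Q2j|]; last by rewrite Pi.
  have := Hy j (sQ2Q j Q2j); rewrite (bigID (fun i : 'I_b => A i)) /=.
  rewrite [X in X + _]big1 ?add0r // => k /andP[Pk Ak].
  by rewrite (M0 _ _ (ltn_ord k) Pk Ak Q2j) mulr0.
move=> i ib Pi; have [Ai|nAi] := boolP (A i); last exact: yC.
apply: (freeA y) => //= [j Qj|]; last by rewrite Pi.
have := Hy j Qj; rewrite (bigID (fun i : 'I_b => A i)) /=.
rewrite [X in _ + X]big1 ?addr0 // => k /andP[Pk nAk].
by rewrite (yC _ (ltn_ord k) Pk nAk) mul0r.
Qed.

Lemma free_rows_congr M M' b (P P' Q Q' : pred nat) :
  free_rows M b P Q ->
  (forall i, (i < b)%N -> P' i = P i) -> (forall j, Q j -> Q' j) ->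
  (forall i j, (i < b)%N -> P i -> Q j -> M' i j = M i j) ->
  free_rows M' b P' Q'.
Proof.
move=> freeM PP' sQ eqM y Hy i ib Pi; apply: (freeM y) => //; last by rewrite -PP'.
move=> j Qj; rewrite -[RHS](Hy j (sQ j Qj)).
rewrite [RHS](eq_bigl (fun k : 'I_b => P k)) => [|k]; last by rewrite PP'.
by apply: eq_bigr => k Pk; rewrite eqM.
Qed.

Lemma free_rows_shift M M' b a c (P Q : pred nat) :
  free_rows M b P Q ->
  (forall i j, (i < b)%N -> P i -> Q j -> M' (a + i)%N (c + j)%N = M i j) ->
  free_rows M' (a + b) (fun i => (a <= i)%N && P (i - a)%N)
                       (fun j => (c <= j)%N && Q (j - c)%N).
Proof.
move=> freeM eqM y Hy i iab /andP[ai Pi].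
rewrite -(subnKC ai); apply: (freeM (fun k => y (a + k)%N)) => //; last first.
  by rewrite ltn_subLR.
move=> j Qj; have := Hy (c + j)%N; rewrite leq_addr addKn => /(_ Qj).
rewrite big_split_ord /= big1 ?add0r => [sum0|k /andP[]]; last first.
  by rewrite leqNgt ltn_ord.
rewrite -[RHS]sum0; apply: eq_big => k /=; first by rewrite leq_addr addKn.
by move=> Pk; rewrite eqM.
Qed.

(* Gaussian elimination against an identity block in the top-left corner. *)
Lemma free_rows_unit_block M b w (P Q : pred nat) :
  (w <= b)%N ->
  (forall i j, (i < w)%N -> (j < w)%N -> M i j = (i == j)%:R) ->
  (forall i j, (i < w)%N -> Q j -> M i j = 0) ->
  (forall i, P i -> (w <= i)%N) -> (forall j, Q j -> (w <= j)%N) ->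
  free_rows M b (fun i => (i < w)%N || P i) (fun j => (j < w)%N || Q j) ->
  free_rows M b P Q.
Proof.
move=> wb Mid M0 Pw Qw freeM y Hy.
pose y' i := if (i < w)%N then - \sum_(i' < b | P i') y i' * M i' i else y i.
have sum_y' j : \sum_(i < b | (i < w)%N || P i) y' i * M i j =
   \sum_(i < b | (i < w)%N) y' i * M i j + \sum_(i < b | P i) y i * M i j.
  rewrite (bigID (fun i : 'I_b => (i < w)%N)) /=; congr (_ + _).
    by apply: eq_bigl => k; case: (k < w)%N; rewrite ?andbF.
  apply: eq_big => k; last by case/andP=> _; rewrite /y' => /negbTE ->.
  have [kw|kw] /= := ltnP k w; rewrite ?andbF ?andbT //.
  by apply/esym/negbTE; apply: contraL kw => /Pw; rewrite -leqNgt.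
move=> i ib Pi; have -> : y i = y' i by rewrite /y' ltnNge Pw.
apply: (freeM y') => //; last by rewrite Pi orbT.
move=> j /orP[jw|Qj]; rewrite sum_y'; last first.
  by rewrite big1 ?add0r ?Hy // => k kw; rewrite M0 ?mulr0.
rewrite (bigD1 (Ordinal (leq_trans jw wb))) //= big1.
  by rewrite /y' jw Mid // eqxx mulr1 addr0 addNr.
move=> k /andP[kw nkj]; rewrite Mid //.
by rewrite (_ : (k == j :> nat) = false) ?mulr0 //; apply: negbTE.
Qed.

End FreeRows.

Section FreeRowsField.
Variable R : fieldType.
Local Open Scope ring_scope.

Lemma row_free_of_free_rows m n p (M : nat -> nat -> R)
    (P : pred nat) (f : 'I_p -> 'I_m) :
  injective f -> (forall d, P (f d)) -> free_rows M m P (fun j => (j < n)%N) ->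
  row_free (\matrix_(d < p, c < n) M (f d) c).
Proof.
move=> f_inj Pf freeM; set A := \matrix_(d, c) _.
rewrite -kermx_eq0; apply/eqP/row_matrixP => i.
set v := row i (kermx A); have v0 : v *m A = 0.
  by apply/sub_kermxP; exact: row_sub.
pose y (s : nat) := \sum_(d < p | f d == s :> nat) v 0 d.
have yf d : y (f d) = v 0 d.
  rewrite /y (bigD1 d) //= big1 ?addr0 // => d' /andP[/eqP e ne].
  by case/eqP: ne; apply: f_inj; apply: val_inj.
apply/rowP => d; rewrite row0 [RHS]mxE -yf; apply: (freeM y) => // j jn.
have := congr1 (fun w : 'M[R]_(1, n) => w 0 (Ordinal jn)) v0; rewrite !mxE => v0j.
apply: etrans v0j; rewrite (partition_big f (fun s : 'I_m => P s)) //=.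
apply: eq_bigr => s _; rewrite /y mulr_suml; apply: eq_bigr => d' /eqP <-.
by rewrite /A mxE.
Qed.

End FreeRowsField.

(** * The AIR matrix *)

Lemma air_aux_fuel f1 f2 m n i j : n <= m -> m <= f1 -> m <= f2 ->
  air_aux f1 m n i j = air_aux f2 m n i j.
Proof.
elim: f1 f2 m n i j => [|f1 IH] [|f2] m n i j nm mf1 mf2 //=.
- by have -> : n = 0 by lia.
- by have -> : n = 0 by lia.
case: eqP => // /eqP n0; case: ifP => // _; case: eqP => // /eqP r0.
case: ifP => // _; have rn : m %% n < n by rewrite ltn_mod lt0n.
by apply: IH; [rewrite ltnW // ltn_mod lt0n | lia | lia].
Qed.

Definition air m n i j := air_aux m m n i j.

Lemma air_top m n i j : 0 < n -> i < m %/ n * n -> air m n i j = (i %% n == j).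
Proof.
rewrite /air; case: m => [|m] n_gt0 /=; first by rewrite div0n.
by rewrite eqn0Ngt n_gt0 /= => ->.
Qed.

Lemma air_bottom_left m n i j : 0 < n -> m %/ n * n <= i -> 0 < m %% n ->
  j < n %/ (m %% n) * (m %% n) ->
  air m n i j = (j %% (m %% n) == i - m %/ n * n).
Proof.
rewrite /air; case: m => [|m] n_gt0 /=; first by rewrite mod0n.
rewrite eqn0Ngt n_gt0 /= => Ti r_gt0; rewrite (ltnNge i) Ti /= eqn0Ngt r_gt0 /=.
by move=> ->.
Qed.

Lemma air_bottom_right m n i j : 0 < n -> n <= m -> m %/ n * n <= i -> 0 < m %% n ->
  n %/ (m %% n) * (m %% n) <= j ->
  air m n i j = air (m %% n) (n %% (m %% n))
                    (i - m %/ n * n) (j - n %/ (m %% n) * (m %% n)).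
Proof.
rewrite /air; case: m => [|m] n_gt0 nm /=; first by rewrite mod0n.
rewrite eqn0Ngt n_gt0 /= => Ti r_gt0; rewrite (ltnNge i) Ti /= eqn0Ngt r_gt0 /=.
rewrite ltnNge => -> /=; have rn : m.+1 %% n < n by rewrite ltn_mod.
by apply: air_aux_fuel => //; [rewrite ltnW // ltn_mod | lia].
Qed.

Lemma modn_block c n i : c * n <= i < c * n + n -> i %% n = i - c * n.
Proof.
case/andP=> lo hi; rewrite -{1}(subnKC lo) modnMDl modn_small //; lia.
Qed.

Lemma modn_last_block q n i : 0 < q -> q * n - n <= i < q * n ->
  i %% n = i - (q * n - n).
Proof.
move=> q_gt0; have qn : q * n - n = q.-1 * n by rewrite -subn1 mulnBl mul1n.
have : q.-1 * n + n = q * n by rewrite -qn subnK // leq_pmull.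
by rewrite qn => e ?; apply: modn_block; lia.
Qed.

Lemma modn_in_block b r x : 0 < r -> x < r -> exists2 j, b <= j < b + r & j %% r = x.
Proof.
move=> r_gt0 xr; exists (b + (x + r - b %% r) %% r).
  by rewrite leq_addr ltn_add2l ltn_mod.
rewrite modnDmr; have bmod := ltn_mod b r; rewrite r_gt0 in bmod.
have -> : b + (x + r - b %% r) = (b %/ r + 1) * r + x.
  by rewrite mulnDl mul1n {1}(divn_eq b r); lia.
by rewrite modnMDl modn_small.
Qed.

(** * Cyclic windows *)

Definition in_window m t n i := (i < m) && ((i + m - t) %% m < n).

Lemma in_windowE m t n i : t < m -> n <= m ->
  in_window m t n i = (i < m) && ((t <= i < t + n) || (i + m < t + n)).
Proof.
move=> tm nm; rewrite /in_window; case: (ltnP i m) => im //=.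
case: (leqP t i) => ti /=; last by rewrite modn_small; lia.
have -> : i + m - t = 1 * m + (i - t) by lia.
by rewrite modnMDl modn_small; lia.
Qed.

Lemma window_offsetK m t d : t < m -> d < m -> ((t + d) %% m + m - t) %% m = d.
Proof.
move=> tm dm; have [tdm|mtd] := ltnP (t + d) m.
  have -> : (t + d) %% m + m - t = d + m by rewrite modn_small //; lia.
  by rewrite modnDr modn_small.
rewrite -{1}(subnK mtd) modnDr.
have -> : (t + d - m) %% m + m - t = d by rewrite modn_small; lia.
exact: modn_small.
Qed.

Lemma window_offsetKV m t s : t < m -> s < m -> (t + (s + m - t) %% m) %% m = s.
Proof.
move=> tm sm; have [ts|st] := leqP t s.
  have -> : s + m - t = (s - t) + m by lia.
  rewrite modnDr (@modn_small (s - t)) ?subnKC ?modn_small //; lia.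
rewrite (@modn_small (s + m - t)); last lia.
have -> : t + (s + m - t) = s + m by lia.
by rewrite modnDr modn_small.
Qed.

Lemma in_window_offset m t n d : t < m -> d < n -> n <= m ->
  in_window m t n ((t + d) %% m).
Proof.
move=> tm dn nm; rewrite /in_window ltn_mod (leq_ltn_trans _ tm) //.
by rewrite window_offsetK //; apply: leq_trans nm.
Qed.

Lemma window_offset_inj m t d d' : t < m -> d < m -> d' < m ->
  (t + d) %% m = (t + d') %% m -> d = d'.
Proof.
by move=> tm dm d'm e; rewrite -(window_offsetK tm dm) e window_offsetK.
Qed.

Lemma not_in_window m t n s : t < m -> s < m -> ~~ in_window m t n s ->
  exists2 e, e < m - n & s = (t + n + e) %% m.
Proof.
move=> tm sm; rewrite /in_window sm -leqNgt => ns.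
have sm' : (s + m - t) %% m < m by rewrite ltn_mod (leq_ltn_trans _ tm).
exists ((s + m - t) %% m - n); first lia.
by rewrite -addnA subnKC // window_offsetKV.
Qed.

(** * Cyclically consecutive rows of an AIR matrix are free *)

Section AirRows.
Variable R : nzRingType.

Definition airR m n i j : R := (air m n i j)%:R.

(* Top rows are copies of the identity, so this gives the top rows of a window
   distinct private columns [i %% n]. *)
Lemma window_top_inj m n t i i' : 0 < n -> n <= m -> t < m ->
  in_window m t n i -> in_window m t n i' ->
  i < m %/ n * n -> i' < m %/ n * n -> i %% n = i' %% n -> i = i'.
Proof.
move=> n_gt0 nm tm; rewrite !in_windowE // => Wi Wi'.
have me := divn_eq m n; have rn : m %% n < n by rewrite ltn_mod.
set q := m %/ n in me *.
wlog le_ii' : i i' Wi Wi' / i <= i'.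
  move=> W Ti Ti' e; have [le|lt] := leqP i i'; first exact: W.
  by apply/esym/(W i' i Wi' Wi (ltnW lt) Ti' Ti (esym e)).
move=> Ti Ti' /esym/eqP; rewrite eqn_mod_dvd // => /dvdnP[c e].
have qn : q.-1 * n = q * n - n by rewrite -subn1 mulnBl mul1n.
have [small|large] : i' - i < n \/ m - n < i' - i by lia.
  have : c * n < 1 * n by lia.
  by rewrite ltn_pmul2r // => c0; lia.
have : c * n < q * n by lia.
rewrite ltn_pmul2r // => c1; have : q.-1 * n < c * n by lia.
by rewrite ltn_pmul2r // => c2; lia.
Qed.

Lemma window_top_free m n t : 0 < n -> n <= m -> t < m ->
  free_rows (airR m n) m (predI (in_window m t n) (fun i => i < m %/ n * n))
            (fun j => j < n).
Proof.
move=> n_gt0 nm tm; apply: free_rows_private => i im /andP[Wi Ti] /=.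
exists (i %% n); first by rewrite ltn_mod.
split=> [|i' i'm /andP[Wi' Ti'] ne]; first by rewrite /airR air_top // eqxx.
rewrite /airR air_top // (_ : _ == _ = false) //; apply/eqP => e.
by case/eqP: ne; apply: (window_top_inj n_gt0 nm tm Wi' Wi Ti' Ti e).
Qed.

Section AirBottom.
Variables m n : nat.
Hypotheses (n_gt0 : 0 < n) (nm : n <= m) (r_gt0 : 0 < m %% n).
(* With m = q n + r and n = q' r + r' as in the construction, [T] = q n rows
   form the top part and [Qr] = q' r columns are filled in Step 2. Proofs
   clear these bodies so that [lia] treats them as atoms. *)
Let T := m %/ n * n.
Let r := m %% n.
Let Qr := n %/ r * r.
Let r' := n %% r.
Let M := airR m n.
Let M' := airR r r'.

Let r_pos : 0 < r. Proof. exact: r_gt0. Qed.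
Let mE : m = T + r. Proof. by rewrite /T /r -divn_eq. Qed.
Let nE : n = Qr + r'. Proof. by rewrite /Qr /r' -divn_eq. Qed.
Let rn : r < n. Proof. by rewrite /r ltn_mod. Qed.
Let r'r : r' < r. Proof. by rewrite /r' ltn_mod. Qed.
Let q'_gt0 : 0 < n %/ r. Proof. by rewrite divn_gt0 // ltnW. Qed.
Let rQr : r <= Qr. Proof. by rewrite /Qr leq_pmull. Qed.
Let nT : n <= T. Proof. by rewrite /T leq_pmull // divn_gt0. Qed.

Let top_entry i j : i < T -> air m n i j = (i %% n == j).
Proof. exact: air_top. Qed.

Let modn_T i : T - n <= i < T -> i %% n = i - (T - n).
Proof. by apply: modn_last_block; rewrite divn_gt0. Qed.

Let bottom_left_entry i j : T <= i -> j < Qr -> air m n i j = (j %% r == i - T).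
Proof. by move=> Ti jQ; rewrite air_bottom_left. Qed.

Let bottom_right_entry i j : T <= i -> Qr <= j -> air m n i j = air r r' (i - T) (j - Qr).
Proof. by move=> Ti Qj; rewrite air_bottom_right. Qed.

Let corner_entry i j : i < r' -> air r r' i j = (i == j).
Proof.
move=> ir'; have r'_gt0 : 0 < r' by apply: leq_ltn_trans ir'.
rewrite air_top ?modn_small //.
by apply: leq_trans ir' _; rewrite leq_pmull // divn_gt0 // ltnW.
Qed.

Let modn_Qr j : Qr - r <= j < Qr -> j %% r = j - (Qr - r).
Proof. exact: modn_last_block q'_gt0. Qed.

Let window_free_of_bottom t (Q : pred nat) : t < m ->
  (forall j, Q j -> j < n) ->
  (forall i j, in_window m t n i -> i < T -> Q j -> M i j = 0%R) ->
  free_rows M m (fun i => in_window m t n i && (T <= i)) Q ->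
  free_rows M m (in_window m t n) (fun j => j < n).
Proof.
move=> tm sQ top0 freeB.
apply: (free_rows_split (A := fun i => i < T) (Q2 := Q)) => //.
- by move=> i j _; apply: top0.
- by apply: free_rows_congr freeB _ _ _ => // i _ /=; rewrite -leqNgt.
- exact: window_top_free.
Qed.

Let free_rows_bottom (P Q : pred nat) : free_rows M' r P Q ->
  free_rows M m (fun i => (T <= i) && P (i - T)) (fun j => (Qr <= j) && Q (j - Qr)).
Proof.
move=> freeP; rewrite mE; apply: free_rows_shift freeP _ => i j _ _ _.
by rewrite /M /M' /airR bottom_right_entry ?addKn ?leq_addr.
Qed.

Let bottom_left_free c :
  free_rows M m (fun i => T + c <= i) (fun j => Qr - r + c <= j < Qr).
Proof.
clearbody T r Qr r'.
apply: free_rows_private => i im Ti.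
have jr : (Qr - r + (i - T)) %% r = i - T by rewrite modn_Qr; lia.
exists (Qr - r + (i - T)); first lia.
split=> [|i' i'm Ti' ne].
  by rewrite /M /airR bottom_left_entry ?jr ?eqxx //; lia.
rewrite /M /airR bottom_left_entry ?jr //; try lia.
by rewrite (_ : _ == _ = false) //; apply/eqP; lia.
Qed.

Lemma bottom_head_free g : g < r ->
  free_rows M m (fun i => T <= i < T + g) (fun j => j < g).
Proof.
clearbody T r Qr r'.
move=> gr; apply: free_rows_private => i im /andP[Ti iTg].
exists (i - T); first lia.
split=> [|i' i'm /andP[Ti' _] ne].
  by rewrite /M /airR bottom_left_entry ?modn_small ?eqxx //; lia.
rewrite /M /airR bottom_left_entry ?modn_small //; try lia.
by rewrite (_ : _ == _ = false) //; apply/eqP; lia.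
Qed.

Lemma bottom_block_free b : b + r <= n ->
  free_rows M m (fun i => T <= i) (fun j => b <= j < b + r).
Proof.
clearbody T r Qr r'.
move=> brn; have [brQ|Qbr] := leqP (b + r) Qr.
  apply: free_rows_private => i im Ti.
  have iTr : i - T < r by lia.
  have [j /andP[bj jbr] jr] := modn_in_block b r_pos iTr.
  exists j; first by rewrite bj jbr.
  split=> [|i' i'm Ti' ne]; first by rewrite /M /airR bottom_left_entry ?jr ?eqxx //; lia.
  rewrite /M /airR bottom_left_entry ?jr //; last lia.
  by rewrite (_ : _ == _ = false) //; apply/eqP; lia.
apply: (free_rows_split (A := fun i => i < T + (b + r - Qr))
                        (Q2 := fun j => b <= j < Qr)).
- move=> i j im /= Ti iT /andP[bj jQ]; rewrite /M /airR bottom_left_entry //.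
  rewrite modn_Qr; last lia.
  by rewrite (_ : _ == _ = false) //; apply/eqP; lia.
- by move=> j /andP[bj jQ]; lia.
- apply: free_rows_congr (bottom_left_free (c := b + r - Qr)) _ _ _ => //.
  + by move=> i _ /=; apply/idP/idP; lia.
  + by move=> j /andP[? ?]; lia.
- apply: free_rows_private => i im /= /andP[Ti iT]; exists (Qr + (i - T)); first lia.
  split=> [|i' i'm /andP[Ti' i'T] ne].
    by rewrite /M /airR bottom_right_entry ?addKn ?corner_entry ?eqxx //; lia.
  rewrite /M /airR bottom_right_entry ?addKn ?corner_entry //; try lia.
  by rewrite (_ : _ == _ = false) //; apply/eqP; lia.
Qed.

Lemma bottom_tail_free g : 0 < g < r ->
  (forall t, t < r -> free_rows M' r (in_window r t r') (fun j => j < r')) ->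
  free_rows M m (fun i => m - g <= i) (fun j => n - g <= j < n).
Proof.
clearbody T r Qr r'.
move=> /andP[g_gt0 gr] IH.
have free_rg := IH (r - g) (ltac:(lia)).
have [gr'|r'g] := leqP g r'.
  have free_corner : free_rows M' r (fun i => r - g <= i) (fun j => r' - g <= j < r').
    apply: (free_rows_unit_block (w := r' - g)); first lia.
    - by move=> i j ? ?; rewrite /M' /airR corner_entry //; lia.
    - move=> i j ? /andP[? ?]; rewrite /M' /airR corner_entry; last lia.
      by rewrite (_ : _ == _ = false) //; apply/eqP; lia.
    - by move=> i ?; lia.
    - by move=> j /andP[? ?]; lia.
    apply: (free_rows_congr free_rg) => //; last by move=> j ?; lia.
    by move=> i ir; rewrite in_windowE; [apply/idP/idP|lia|lia]; lia.
  apply: free_rows_congr (free_rows_bottom free_corner) _ _ _ => //.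
  - by move=> i im; apply/idP/idP; lia.
  - by move=> j /andP[? ?]; lia.
apply: (free_rows_split (A := fun i => i < m - g + r')
                        (Q2 := fun j => n - g <= j < Qr)).
- move=> i j im /= ? ? /andP[? ?]; rewrite /M /airR bottom_left_entry; try lia.
  rewrite modn_Qr; last lia.
  by rewrite (_ : _ == _ = false) //; apply/eqP; lia.
- by move=> j /andP[? ?]; lia.
- apply: free_rows_congr (bottom_left_free (c := r - g + r')) _ _ _ => //.
  + by move=> i _ /=; apply/idP/idP; lia.
  + by move=> j /andP[? ?]; lia.
apply: free_rows_congr (free_rows_bottom free_rg) _ _ _ => //.
- by move=> i im /=; rewrite in_windowE; [apply/idP/idP|lia|lia]; lia.
- by move=> j /andP[? ?]; lia.
Qed.

Lemma window_free_head t : t <= T -> t + n < m ->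
  free_rows M m (in_window m t n) (fun j => j < n).
Proof.
clearbody T r Qr r' => tT tnm; have tm : t < m by lia.
apply: (window_free_of_bottom (Q := fun j => j < t + n - T)) => //.
- by move=> j; lia.
- move=> i j; rewrite in_windowE // => Wi iT jg.
  rewrite /M /airR top_entry // modn_T; last lia.
  by rewrite (_ : _ == _ = false) //; apply/eqP; lia.
apply: free_rows_congr (bottom_head_free (g := t + n - T) _) _ _ _ => //; first lia.
by move=> i im; rewrite in_windowE //; apply/idP/idP; lia.
Qed.

Lemma window_free_wrap t : t <= T -> m <= t + n ->
  free_rows M m (in_window m t n) (fun j => j < n).
Proof.
clearbody T r Qr r' => tT mtn; have tm : t < m by lia.
apply: (window_free_of_bottom (Q := fun j => t + n - m <= j < t + n - m + r)) => //.
- by move=> j; lia.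
- move=> i j; rewrite in_windowE // => Wi iT /andP[jlo jhi].
  rewrite /M /airR top_entry //; have [ilo|ihi] := ltnP i (t + n - m).
    rewrite modn_small; last lia.
    by rewrite (_ : _ == _ = false) //; apply/eqP; lia.
  rewrite modn_T; last lia.
  by rewrite (_ : _ == _ = false) //; apply/eqP; lia.
apply: free_rows_congr (bottom_block_free (b := t + n - m) _) _ _ _ => //; first lia.
by move=> i im; rewrite in_windowE //; apply/idP/idP; lia.
Qed.

Lemma window_free_tail t : T < t < m ->
  (forall t', t' < r -> free_rows M' r (in_window r t' r') (fun j => j < r')) ->
  free_rows M m (in_window m t n) (fun j => j < n).
Proof.
clearbody T r Qr r' => /andP[Tt tm] IH.
apply: (window_free_of_bottom (Q := fun j => n - (m - t) <= j < n)) => //.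
- by move=> j /andP[].
- move=> i j; rewrite in_windowE // => Wi iT /andP[jlo jhi].
  rewrite /M /airR top_entry // modn_small; last lia.
  by rewrite (_ : _ == _ = false) //; apply/eqP; lia.
apply: free_rows_congr (bottom_tail_free (g := m - t) _ IH) _ _ _ => //; first lia.
by move=> i im; rewrite in_windowE //; apply/idP/idP; lia.
Qed.

End AirBottom.

Theorem air_window_free m n t : n <= m -> t < m ->
  free_rows (airR m n) m (in_window m t n) (fun j => j < n).
Proof.
elim/ltn_ind: m n t => m IH n t nm tm.
have [->|n_gt0] := posnP n.
  by apply: free_rows0 => i _; rewrite /in_window ltn0 andbF.
have [r0|r_gt0] := posnP (m %% n).
  have mT : m %/ n * n = m by rewrite {2}(divn_eq m n) r0 addn0.
  apply: free_rows_congr (window_top_free n_gt0 nm tm) _ _ _ => // i im /=.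
  by rewrite mT im andbT.
have [tT|Tt] := leqP t (m %/ n * n).
  have [tnm|mtn] := ltnP (t + n) m.
    exact: window_free_head.
  exact: window_free_wrap.
have Ttm : m %/ n * n < t < m by rewrite Tt.
apply: window_free_tail Ttm _ => // t' t'r.
have rn : m %% n < n by rewrite ltn_mod.
by apply: IH => //; [apply: leq_trans rn nm | rewrite ltnW // ltn_mod].
Qed.

End AirRows.

(** * The code *)

Section CodeParameters.
Variables K D U : nat.

Lemma a_par_gt0 : 0 < a_par K D U.
Proof. by rewrite !gcdn_gt0 ltn0Sn !orbT. Qed.

Lemma mul_a_par_K_a : a_par K D U * K_a K D U = K.
Proof. by rewrite mulnC divnK // dvdn_gcdl. Qed.

Lemma mul_a_par_u_a : a_par K D U * u_a K D U = U.+1.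
Proof. by rewrite mulnC divnK // (dvdn_trans (dvdn_gcdr _ _)) ?dvdn_gcdr. Qed.

Lemma mul_a_par_Delta_a : a_par K D U * Delta_a K D U = D - U.
Proof. by rewrite mulnC divnK // (dvdn_trans (dvdn_gcdr _ _)) ?dvdn_gcdl. Qed.

Hypotheses (hUD : U <= D) (hK : U + D + 2 <= K).

Lemma mul_a_par_N_len : a_par K D U * N_len K D U = K - D + U.
Proof.
have := mul_a_par_K_a; have := mul_a_par_Delta_a.
by rewrite /N_len mulnBr; lia.
Qed.

Lemma u_a_lt_N_len : u_a K D U < N_len K D U.
Proof.
rewrite -(ltn_pmul2l a_par_gt0) mul_a_par_u_a mul_a_par_N_len; lia.
Qed.

Lemma Delta_a_lt_K_a : Delta_a K D U < K_a K D U.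
Proof.
have := u_a_lt_N_len; rewrite /N_len; lia.
Qed.

Lemma code_rate :
  ((u_a K D U)%:R / (N_len K D U)%:R = (U + 1)%:R / (K - D + U)%:R :> rat)%R.
Proof.
rewrite addn1 -mul_a_par_u_a -mul_a_par_N_len !natrM -mulf_div divff ?mul1r //.
by rewrite pnatr_eq0 -lt0n a_par_gt0.
Qed.

End CodeParameters.

Section LinearOnTuples.
Variables (R : nzRingType) (I : finType) (p q : nat).
Local Open Scope ring_scope.

Variable f : (I -> 'rV[R]_p) -> 'rV[R]_q.
Hypothesis f_ext : forall x x', x =1 x' -> f x = f x'.
Hypothesis f_linear : forall c x x', f (fun l => c *: x l + x' l) = c *: f x + f x'.

Definition coef_mx (l : I) : 'M[R]_(p, q) :=
  \matrix_(i, c) f (fun l' => if l' == l then delta_mx 0 i else 0) 0 c.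

Let f0 : f (fun=> 0) = 0.
Proof.
apply: (@addrI _ (f (fun=> 0))); rewrite addr0 -[X in X + _]scale1r -f_linear.
by apply: f_ext => l; rewrite scaler0 addr0.
Qed.

Let f_scale c x : f (fun l => c *: x l) = c *: f x.
Proof. by rewrite -[RHS]addr0 -f0 -f_linear; apply: f_ext => l; rewrite addr0. Qed.

Let f_sum (J : Type) (r : seq J) (G : J -> I -> 'rV[R]_p) :
  f (fun l => \sum_(j <- r) G j l) = \sum_(j <- r) f (G j).
Proof.
elim: r => [|j r IHr]; first by rewrite big_nil -f0; apply: f_ext => l; rewrite big_nil.
rewrite big_cons -IHr -[f (G j)]scale1r -f_linear.
by apply: f_ext => l; rewrite big_cons scale1r.
Qed.

Lemma linear_tuple_mx x : f x = \sum_l x l *m coef_mx l.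
Proof.
pose e (l : I) (i : 'I_p) (l' : I) : 'rV[R]_p := if l' == l then delta_mx 0 i else 0.
have -> : f x = f (fun l' => \sum_l \sum_i x l 0 i *: e l i l').
  apply: f_ext => l'; rewrite (bigD1 l') //= [X in _ + X]big1 ?addr0.
    by rewrite {1}(row_sum_delta (x l')); apply: eq_bigr => i _; rewrite /e eqxx.
  by move=> l nl; apply: big1 => i _; rewrite /e eq_sym (negbTE nl) scaler0.
rewrite f_sum; apply: eq_bigr => l _; rewrite f_sum mulmx_sum_row.
apply: eq_bigr => i _; rewrite f_scale.
by congr (_ *: _); apply/rowP => c; rewrite !mxE.
Qed.

End LinearOnTuples.

Section CodeLinear.
Variables (F : nzRingType) (K D U : nat).
Local Notation u := (u_a K D U).
Local Open Scope ring_scope.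

Lemma xat_linear p c (x x' : 'I_K -> 'rV[F]_p) m :
  xat (fun l => c *: x l + x' l) m = c *: xat x m + xat x' m.
Proof. by rewrite /xat; case: insub => [l|] //=; rewrite scaler0 addr0. Qed.

Lemma code_ext (x x' : 'I_K -> 'rV[F]_u) : x =1 x' -> code x = code x'.
Proof.
move=> xx'; rewrite /code /y_sym; apply: eq_bigr => s _; congr (_ *: _).
apply: eq_bigr => i _; apply: eq_bigr => j _.
by rewrite /xat; case: insub => // l; rewrite xx'.
Qed.

Lemma code_linear c (x x' : 'I_K -> 'rV[F]_u) :
  code (fun l => c *: x l + x' l) = c *: code x + code x'.
Proof.
rewrite /code scaler_sumr -big_split; apply: eq_bigr => s _ /=.
rewrite scalerA -scalerDl /y_sym mulr_sumr -big_split; congr (_ *: _).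
apply: eq_bigr => i _; rewrite mulr_sumr -big_split; apply: eq_bigr => j _ /=.
by rewrite xat_linear !mxE.
Qed.

(* Linear decodability only has to be checked on messages vanishing on the
   side information: the contribution of the side information to the code
   is a known linear term that the receiver subtracts. *)
Lemma decodable_of_decoder (k : 'I_K) (Dm : 'M[F]_(N_len K D U, u)) :
  k \notin side D U k ->
  (forall x, {in side D U k, forall l, x l = 0} -> code x *m Dm = x k) ->
  decodable F D U k.
Proof.
move=> kS decD; exists Dm, (fun l => - (coef_mx (@code F K D U) l *m Dm)) => x.
have code_repr := linear_tuple_mx code_ext code_linear.
pose xN l := if l \in side D U k then 0 else x l.
have <- : code xN *m Dm = x k by rewrite decD /xN ?(negbTE kS) // => l ->.
have -> : code xN = code x - \sum_(l in side D U k) x l *m coef_mx (@code F K D U) l.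
  rewrite !code_repr [in RHS](bigID (mem (side D U k))) /= addrAC subrr add0r.
  rewrite [LHS](bigID (mem (side D U k))) /= big1 ?add0r => [|l lS]; last first.
    by rewrite /xN lS mul0mx.
  by apply: eq_bigr => l /negbTE lS; rewrite /xN lS.
rewrite mulmxBl; congr (_ + _); rewrite mulmx_suml -sumrN.
by apply: eq_bigr => l _; rewrite mulmxN mulmxA.
Qed.

End CodeLinear.


(** * Decoding at a receiver *)

Lemma self_notin_side K D U (k : 'I_K) : U + D < K -> k \notin side D U k.
Proof.
move=> UDK; have kK := ltn_ord k; rewrite inE negb_or.
apply/andP; split; apply/existsP => -[t /andP[t_gt0 /eqP /= kt]]; have tlt := ltn_ord t.
  have [tk|kt'] := leqP t k.
    by move: kt; rewrite -addnBAC // modnDr modn_small; lia.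
  by move: kt; rewrite modn_small; lia.
have [tK|Kt] := ltnP (k + t) K; first by move: kt; rewrite modn_small; lia.
by move: kt; rewrite -(subnK Kt) modnDr modn_small; lia.
Qed.

Section Receiver.
Variable F : fieldType.
Variables (K D U : nat) (k : 'I_K).
Hypotheses (hUD : U <= D) (hK : U + D + 2 <= K).

Local Notation a := (a_par K D U).
Local Notation u := (u_a K D U).
Local Notation Dl := (Delta_a K D U).
Local Notation n := (K_a K D U).
Local Notation N := (N_len K D U).
Local Notation b0 := (k %/ a).
Local Notation j0 := (k %% a).

Let a_gt0 : 0 < a := a_par_gt0 K D U.
Let aK : a * n = K := mul_a_par_K_a K D U.
Let au : a * u = U.+1 := mul_a_par_u_a K D U.
Let aDl : a * Dl = D - U := mul_a_par_Delta_a K D U.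
Let uN : u < N := u_a_lt_N_len hUD hK.
Let Dln : Dl < n := Delta_a_lt_K_a hUD hK.
Let n_gt0 : 0 < n. Proof. exact: leq_ltn_trans Dln. Qed.
Let j0_lt_a : j0 < a. Proof. by rewrite ltn_mod. Qed.

Let msg (o : int) : 'I_K := insubd k `|((k%:Z + o)%R %% K%:Z)%Z|.

Let val_msg o : msg o = `|((k%:Z + o)%R %% K%:Z)%Z| :> nat.
Proof.
have K_gt0 : (0 < K%:Z)%R by rewrite ltz_nat; lia.
have ge0 : (0 <= ((k%:Z + o) %% K%:Z)%Z)%R by rewrite modz_ge0 // lt0r_neq0.
have ltK : (((k%:Z + o) %% K%:Z)%Z < K%:Z)%R by rewrite ltz_pmod.
by rewrite val_insubd ifT // -ltz_nat gez0_abs.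
Qed.

Let msg0 : msg 0 = k.
Proof. by apply: ord_inj; rewrite val_msg addr0 modz_nat absz_nat modn_small. Qed.

Let msg_in_side (o : int) :
  (- (U%:Z) <= o <= D%:Z)%R -> o != 0 -> msg o \in side D U k.
Proof.
case/andP; rewrite inE; case: o => t lo hi o0; apply/orP.
  right; have tD : t < D.+1 by rewrite ltnS -lez_nat.
  apply/existsP; exists (Ordinal tD); rewrite /= lt0n o0 /=.
  by rewrite val_msg -PoszD modz_nat absz_nat.
left; have tU : t.+1 < U.+1 by move: lo; rewrite NegzE lerN2 lez_nat.
apply/existsP; exists (Ordinal tU) => /=; rewrite val_msg NegzE -(modzDr _ K).
have -> : (k%:Z + - t.+1%:Z + K%:Z)%R = (k + K - t.+1)%N by lia.
by rewrite modz_nat absz_nat.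
Qed.

(* The term [x_(a (s - i) + j)] of [y_s], for [s = b0 + d], is the message at
   offset [a d + j - (j0 + a i)] from [k = a b0 + j0]. *)
Let xat_offset (x : 'I_K -> 'rV[F]_u) d i j : i < u ->
  xat x (K + a * ((b0 + d) %% n) + j - a * i)
  = x (msg ((a * d + j)%:Z - (j0 + a * i)%:Z)%R).
Proof.
move=> iu; have aiK : a * i <= K.
  have : a * i < a * u by rewrite ltn_mul2l a_gt0.
  lia.
rewrite /xat insubT ?ltn_mod; first lia.
move=> P_lt; congr x; apply: ord_inj; rewrite /= val_msg -[LHS]absz_nat -modz_nat.
set q := (b0 + d) %/ n; set s := (b0 + d) %% n.
have qs : a * (b0 + d) = q * K + a * s.
  by rewrite {1}(divn_eq (b0 + d) n) mulnDr mulnCA aK.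
have kE : k = a * b0 + j0 :> nat by rewrite mulnC -divn_eq.
have -> : Posz (K + a * s + j - a * i)
          = ((1 - q%:Z) * K%:Z + (k%:Z + ((a * d + j)%:Z - (j0 + a * i)%:Z)))%R.
  by lia.
by rewrite modzMDl.
Qed.

Lemma y_sym_known (x : 'I_K -> 'rV[F]_u) e :
  {in side D U k, forall l, x l = 0%R} -> e < Dl ->
  y_sym x ((b0 + (u + e)) %% n) = 0%R.
Proof.
move=> x0 eDl; rewrite /y_sym big1 // => i _; rewrite big1 // => j _.
have ai : a * i.+1 <= a * u by rewrite leq_mul2l ltn_ord orbT.
have ae : a * e.+1 <= a * Dl by rewrite leq_mul2l eDl orbT.
have ja := ltn_ord j; move: ai ae; rewrite !mulnS => ai ae.
by rewrite xat_offset // x0 ?mxE //; apply: msg_in_side; lia.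
Qed.

Lemma y_sym_wanted (x : 'I_K -> 'rV[F]_u) (i0 : 'I_u) :
  {in side D U k, forall l, x l = 0%R} ->
  y_sym x ((b0 + i0) %% n) = x k ord0 i0.
Proof.
move=> x0.
have term0 (i : 'I_u) (j : 'I_a) : (i != i0) || (j != j0 :> nat) ->
    xat x (K + a * ((b0 + i0) %% n) + j - a * i) ord0 i = 0%R.
  move=> ne; rewrite xat_offset // x0 ?mxE //.
  have ai : a * i.+1 <= a * u by rewrite leq_mul2l ltn_ord orbT.
  have ai0 : a * i0.+1 <= a * u by rewrite leq_mul2l ltn_ord orbT.
  have ja := ltn_ord j; move: ai ai0; rewrite !mulnS => ai ai0.
  have [lt|gt|eq] := ltngtP i i0.
  - have : a * i.+1 <= a * i0 by rewrite leq_mul2l lt orbT.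
    by rewrite mulnS => ?; apply: msg_in_side; lia.
  - have : a * i0.+1 <= a * i by rewrite leq_mul2l gt orbT.
    by rewrite mulnS => ?; apply: msg_in_side; lia.
  - move: ne; rewrite (ord_inj eq) eqxx /= => jj0.
    by apply: msg_in_side; lia.
rewrite /y_sym (bigD1 i0) //= [X in (_ + X)%R]big1 ?addr0 => [|i ne]; last first.
  by apply: big1 => j _; apply: term0; rewrite ne.
rewrite (bigD1 (Ordinal j0_lt_a)) //= [X in (_ + X)%R]big1 ?addr0 => [|j ne]; last first.
  by apply: term0; rewrite eqxx; exact: ne.
by rewrite xat_offset // (addnC (a * i0)) subrr msg0.
Qed.

Local Notation t0 := ((b0 + u + Dl) %% n).
Local Notation W := (in_window n t0 N).

Let N_le_n : N <= n. Proof. exact: leq_subr. Qed.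
Let t0_lt_n : t0 < n. Proof. by rewrite ltn_mod. Qed.
Let N_gt0 : 0 < N. Proof. exact: leq_ltn_trans uN. Qed.

Let window_row (d : 'I_N) : 'I_n := Ordinal (ltn_pmod (t0 + d) n_gt0).

Let window_row_inj : injective window_row.
Proof.
move=> d d' /(congr1 val) /= e; apply: val_inj; apply: window_offset_inj e => //.
  exact: leq_trans (ltn_ord d) N_le_n.
exact: leq_trans (ltn_ord d') N_le_n.
Qed.

Let in_window_row d : W (window_row d).
Proof. exact: in_window_offset. Qed.

Let big_window (V : nmodType) (G : 'I_n -> V) :
  (\sum_(s < n | W s) G s = \sum_(d < N) G (window_row d))%R.
Proof.
pose back (s : 'I_n) : 'I_N := insubd (Ordinal N_gt0) ((s + n - t0) %% n).
rewrite (reindex_onto window_row back) => [|s Ws]; last first.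
  move: Ws; rewrite /in_window => /andP[_ Ws]; apply: val_inj.
  by rewrite /= val_insubd Ws window_offsetKV.
apply: eq_bigl => d; rewrite in_window_row /=; apply/eqP/val_inj.
have dn : d < n by apply: leq_trans N_le_n.
by rewrite /back val_insubd /= window_offsetK // ltn_ord.
Qed.

Let y_sym_out (x : 'I_K -> 'rV[F]_u) s : {in side D U k, forall l, x l = 0%R} ->
  s < n -> ~~ W s -> y_sym x s = 0%R.
Proof.
move=> x0 sn nWs; have [e eDl ->] := not_in_window t0_lt_n sn nWs.
have -> : (t0 + N + e) %% n = (b0 + (u + e)) %% n.
  rewrite -addnA modnDml -(modnDr (b0 + (u + e))); congr (_ %% _).
  by move: Dln; rewrite /N_len; lia.
by apply: y_sym_known => //; move: eDl; rewrite /N_len; lia.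
Qed.

Let wanted_pos_lt (i : 'I_u) : N - u + i < N. Proof. have := ltn_ord i; lia. Qed.
Let wanted_pos (i : 'I_u) : 'I_N := Ordinal (wanted_pos_lt i).

Let wanted_pos_offset i : (t0 + wanted_pos i) %% n = (b0 + i) %% n.
Proof.
rewrite /= modnDml -(modnDr (b0 + i)); congr (_ %% _).
have := ltn_ord i; move: uN; rewrite /N_len; lia.
Qed.

Let window_mx : 'M[F]_N := \matrix_(d, c) airR F n N (window_row d) c.

Let window_mx_unit : window_mx \in unitmx.
Proof.
rewrite -row_free_unit; apply: row_free_of_free_rows window_row_inj in_window_row _.
exact: air_window_free.
Qed.

Lemma receiver_decoder : exists Dm : 'M[F]_(N, u),
  forall x, {in side D U k, forall l, x l = 0%R} -> (code x *m Dm)%R = x k.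
Proof.
pose pick_wanted : 'M[F]_(N, u) := (\matrix_(d, i) (d == wanted_pos i :> nat)%:R)%R.
exists (invmx window_mx *m pick_wanted)%R => x x0.
have code_window : code x = (\row_d y_sym x (window_row d) *m window_mx)%R.
  rewrite mulmx_sum_row /code (bigID (fun s : 'I_n => W s)) /=.
  rewrite [X in (_ + X)%R]big1 ?addr0 => [|s nWs]; last by rewrite y_sym_out ?scale0r.
  rewrite big_window; apply: eq_bigr => d _; rewrite mxE; congr (_ *: _)%R.
  by apply/rowP => c; rewrite !mxE.
rewrite code_window mulmxA mulmxK //; apply/rowP => i; rewrite !mxE.
rewrite (bigD1 (wanted_pos i)) //= big1 => [|d ne]; last first.
  by rewrite !mxE (_ : (d == _ :> nat) = false) ?mulr0 //; apply/negbTE.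
by rewrite !mxE eqxx mulr1 addr0 wanted_pos_offset y_sym_wanted.
Qed.

End Receiver.

Local Open Scope ring_scope.

Theorem theorem1 (F : finFieldType) (K D U : nat) :
  (U <= D)%N -> (U + D + 2 <= K)%N ->
  (forall k : 'I_K, decodable F D U k) /\
  ((u_a K D U)%:R / (N_len K D U)%:R = (U + 1)%:R / (K - D + U)%:R :> rat).
Proof.
move=> hUD hK; split; last exact: code_rate.
move=> k; have [Dm decD] := @receiver_decoder F K D U k hUD hK.
by apply: decodable_of_decoder decD; apply: self_notin_side; lia.
Qed.
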